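(* For all well-typed terms $\Gamma\vdash t:A$ and $\Gamma\vdash u:A$ of $\lambda^{SJ}$: $\Gamma\vdash t\equiv u:A$ holds in $\lambda^{SJ}$ if and only if $[\![t]\!]=[\![u]\!]:[\![\Gamma]\!]\to[\![A]\!]$ in every categorical model of $\lambda^{SJ}$ (every cartesian closed category with a strong semimonad, for every interpretation of the base type).
   Context: Types: $A,B ::= \iota \mid 1 \mid A\times B \mid A\to B \mid \Diamond A$, where $\iota$ is a base type. A context $\Gamma$ is a list $x_1:A_1,\dots,x_n:A_n$ of distinct variables. Terms of the simply typed part: variables, $()$, $\langle t,u\rangle$, $\mathsf{fst}\,t$, $\mathsf{snd}\,t$, $\lambda x.t$, $t\,u$, with the standard typing rules. The calculus $\lambda^{SJ}$ adds: (letmap) if $\Gamma\vdash t:\Diamond A$ and $\Gamma,x:A\vdash u:B$ then $\Gamma\vdash \mathsf{letmap}\ x=t\ \mathsf{in}\ u:\Diamond B$; (let) if $\Gamma\vdash t:\Diamond A$ and $\Gamma,x:A\vdash u:\Diamond B$ then $\Gamma\vdash\mathsf{let}\ x=t\ \mathsf{in}\ u:\Diamond B$. Its equational theory $\equiv$ is the least congruence on well-typed terms containing the simply typed $\beta\eta$-laws ($t\equiv()$ for $t:1$; $t\equiv\langle\mathsf{fst}\,t,\mathsf{snd}\,t\rangle$; $\mathsf{fst}\langle t,u\rangle\equiv t$; $\mathsf{snd}\langle t,u\rangle\equiv u$; $t\equiv\lambda x.\,t\,x$ with $x$ fresh; $(\lambda x.t)\,u\equiv t[u/x]$) and: $t\equiv\mathsf{letmap}\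 x=t\ \mathsf{in}\ x$; $\mathsf{letmap}\ y=(\mathsf{letmap}\ x=t\ \mathsf{in}\ u)\ \mathsf{in}\ u'\equiv\mathsf{letmap}\ x=t\ \mathsf{in}\ u'[u/y]$; $\mathsf{let}\ y=(\mathsf{letmap}\ x=t\ \mathsf{in}\ u)\ \mathsf{in}\ u'\equiv\mathsf{let}\ x=t\ \mathsf{in}\ u'[u/y]$; $\mathsf{letmap}\ y=(\mathsf{let}\ x=t\ \mathsf{in}\ u)\ \mathsf{in}\ u'\equiv\mathsf{let}\ x=t\ \mathsf{in}\ (\mathsf{letmap}\ y=u\ \mathsf{in}\ u')$; $\mathsf{let}\ y=(\mathsf{let}\ x=t\ \mathsf{in}\ u)\ \mathsf{in}\ u'\equiv\mathsf{let}\ x=t\ \mathsf{in}\ (\mathsf{let}\ y=u\ \mathsf{in}\ u')$ (terms implicitly weakened where needed). A categorical model of $\lambda^{SJ}$ is a cartesian closed category $\mathcal C$ with an endofunctor $D$, a strength $\mathrm{st}_{X,Y}:X\times DY\to D(X\times Y)$ (natural, with $D\pi_2\circ\mathrm{st}_{1,X}=\pi_2$ and $D\alpha\circ\mathrm{st}_{X\times Y,Z}=\mathrm{st}_{X,Y\times Z}\circ(\mathrm{id}\times\mathrm{st}_{Y,Z})\circ\alpha$), and a natural transformation $\mu:DD\Rightarrow D$ that is associative ($\mu_X\circ\mu_{DX}=\mu_X\circ D\mu_X$) and strong ($\mu_{X\times Y}\circ D\mathrm{st}_{X,Y}\circ\mathrm{st}_{X,DY}=\mathrm{st}_{X,Y}\circ(\mathrm{id}_X\times\mu_Y)$).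 Given an object interpreting $\iota$, types/contexts/simply typed terms are interpreted in the standard cartesian closed way with $[\![\Diamond A]\!]=D[\![A]\!]$, $[\![\mathsf{letmap}\ x=t\ \mathsf{in}\ u]\!]=D[\![u]\!]\circ\mathrm{st}\circ\langle\mathrm{id},[\![t]\!]\rangle$ and $[\![\mathsf{let}\ x=t\ \mathsf{in}\ u]\!]=\mu\circ D[\![u]\!]\circ\mathrm{st}\circ\langle\mathrm{id},[\![t]\!]\rangle$. *)

From Stdlib Require Import List.
Import ListNotations.

Set Implicit Arguments.

(* A context is a list of types; the head is the most recent variable. *)

Inductive ty : Set :=
| Base : ty
| Unit : ty
| Prod : ty -> ty -> ty
| Arr  : ty -> ty -> ty
| Dia  : ty -> ty.

Definition ctx := list ty.

Inductive var : ctx -> ty -> Type :=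
| VZ : forall G A, var (A :: G) A
| VS : forall G A B, var G A -> var (B :: G) A.
Arguments VZ {G A}.
Arguments VS {G A B} _.

Inductive tm : ctx -> ty -> Type :=
| tvar : forall G A, var G A -> tm G A
| tunit : forall G, tm G Unit
| tpair : forall G A B, tm G A -> tm G B -> tm G (Prod A B)
| tfst : forall G A B, tm G (Prod A B) -> tm G A
| tsnd : forall G A B, tm G (Prod A B) -> tm G B
| tlam : forall G A B, tm (A :: G) B -> tm G (Arr A B)
| tapp : forall G A B, tm G (Arr A B) -> tm G A -> tm G B
| tletmap : forall G A B, tm G (Dia A) -> tm (A :: G) B -> tm G (Dia B)
| tlet : forall G A B, tm G (Dia A) -> tm (A :: G) (Dia B) -> tm G (Dia B).
Arguments tvar {G A} _.
Arguments tunit {G}.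
Arguments tpair {G A B} _ _.
Arguments tfst {G A B} _.
Arguments tsnd {G A B} _.
Arguments tlam {G A B} _.
Arguments tapp {G A B} _ _.
Arguments tletmap {G A B} _ _.
Arguments tlet {G A B} _ _.

Definition renaming (G D : ctx) := forall C, var G C -> var D C.
Definition substitution (G D : ctx) := forall C, var G C -> tm D C.

Definition ren_lift {G D : ctx} (B : ty) (r : renaming G D) : renaming (B :: G) (B :: D) :=
  fun A v =>
    match v in var L A0
      return match L with
             | [] => unit
             | B' :: G' => renaming G' D -> var (B' :: D) A0
             end with
    | VZ => fun _ => VZ
    | VS v' => fun r' => VS (r' _ v')
    end r.

Fixpoint ren {G A} (t : tm G A) : forall D, renaming G D -> tm D A :=
  match t in tm G0 A0 return forall D, renaming G0 D -> tm D A0 with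
  | tvar v => fun D r => tvar (r _ v)
  | tunit => fun D r => tunit
  | tpair t1 t2 => fun D r => tpair (ren t1 r) (ren t2 r)
  | tfst t1 => fun D r => tfst (ren t1 r)
  | tsnd t1 => fun D r => tsnd (ren t1 r)
  | tlam t1 => fun D r => tlam (ren t1 (@ren_lift _ _ _ r))
  | tapp t1 t2 => fun D r => tapp (ren t1 r) (ren t2 r)
  | tletmap t1 t2 => fun D r => tletmap (ren t1 r) (ren t2 (@ren_lift _ _ _ r))
  | tlet t1 t2 => fun D r => tlet (ren t1 r) (ren t2 (@ren_lift _ _ _ r))
  end.

Definition wk {G A} (B : ty) (t : tm G A) : tm (B :: G) A :=
  ren t (fun C v => @VS G C B v).

Definition scons {G D : ctx} {B : ty} (u : tm D B) (s : substitution G D)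
  : substitution (B :: G) D :=
  fun A v =>
    match v in var L A0
      return match L with
             | [] => unit
             | B' :: G' => tm D B' -> substitution G' D -> tm D A0
             end with
    | VZ => fun u' _ => u'
    | VS v' => fun _ s' => s' _ v'
    end u s.

Definition sub_lift {G D : ctx} (B : ty) (s : substitution G D)
  : substitution (B :: G) (B :: D) :=
  scons (tvar VZ) (fun C v => wk B (s C v)).

Fixpoint sub {G A} (t : tm G A) : forall D, substitution G D -> tm D A :=
  match t in tm G0 A0 return forall D, substitution G0 D -> tm D A0 with
  | tvar v => fun D s => s _ v
  | tunit => fun D s => tunit
  | tpair t1 t2 => fun D s => tpair (sub t1 s) (sub t2 s)
  | tfst t1 => fun D s => tfst (sub t1 s)
  | tsnd t1 => fun D s => tsnd (sub t1 s)
  | tlam t1 => fun D s => tlam (sub t1 (@sub_lift _ _ _ s))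
  | tapp t1 t2 => fun D s => tapp (sub t1 s) (sub t2 s)
  | tletmap t1 t2 => fun D s => tletmap (sub t1 s) (sub t2 (@sub_lift _ _ _ s))
  | tlet t1 t2 => fun D s => tlet (sub t1 s) (sub t2 (@sub_lift _ _ _ s))
  end.

Definition ids {G : ctx} : substitution G G := fun C v => tvar v.

Definition subst1 {G A B} (t : tm (B :: G) A) (u : tm G B) : tm G A :=
  sub t (scons u ids).

(* u'[u/y] where G, y:B |- u' : C and G, x:A |- u : B  (u' weakened by x) *)
Definition subst_under {G A B C} (u' : tm (B :: G) C) (u : tm (A :: G) B)
  : tm (A :: G) C :=
  sub u' (scons u (fun C v => tvar (@VS G C A v))).

Definition wk_under {G B C} (A : ty) (u' : tm (B :: G) C) : tm (B :: A :: G) C :=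
  ren u' (@ren_lift G (A :: G) B (fun C v => @VS G C A v)).

Inductive teq : forall G A, tm G A -> tm G A -> Prop :=
| teq_refl : forall G A (t : tm G A), teq t t
| teq_sym : forall G A (t u : tm G A), teq t u -> teq u t
| teq_trans : forall G A (t u v : tm G A), teq t u -> teq u v -> teq t v
| teq_pair : forall G A B (t t' : tm G A) (u u' : tm G B),
    teq t t' -> teq u u' -> teq (tpair t u) (tpair t' u')
| teq_fst : forall G A B (t t' : tm G (Prod A B)), teq t t' -> teq (tfst t) (tfst t')
| teq_snd : forall G A B (t t' : tm G (Prod A B)), teq t t' -> teq (tsnd t) (tsnd t')
| teq_lam : forall G A B (t t' : tm (A :: G) B), teq t t' -> teq (tlam t) (tlam t')
| teq_app : forall G A B (t t' : tm G (Arr A B)) (u u' : tm G A),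
    teq t t' -> teq u u' -> teq (tapp t u) (tapp t' u')
| teq_letmap : forall G A B (t t' : tm G (Dia A)) (u u' : tm (A :: G) B),
    teq t t' -> teq u u' -> teq (tletmap t u) (tletmap t' u')
| teq_let : forall G A B (t t' : tm G (Dia A)) (u u' : tm (A :: G) (Dia B)),
    teq t t' -> teq u u' -> teq (tlet t u) (tlet t' u')
| teq_unit_eta : forall G (t : tm G Unit), teq t tunit
| teq_pair_eta : forall G A B (t : tm G (Prod A B)), teq t (tpair (tfst t) (tsnd t))
| teq_fst_beta : forall G A B (t : tm G A) (u : tm G B), teq (tfst (tpair t u)) t
| teq_snd_beta : forall G A B (t : tm G A) (u : tm G B), teq (tsnd (tpair t u)) u
| teq_lam_eta : forall G A B (t : tm G (Arr A B)),
    teq t (tlam (tapp (wk A t) (tvar VZ)))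
| teq_lam_beta : forall G A B (t : tm (A :: G) B) (u : tm G A),
    teq (tapp (tlam t) u) (subst1 t u)
| teq_letmap_id : forall G A (t : tm G (Dia A)), teq t (tletmap t (tvar VZ))
| teq_letmap_letmap : forall G A B C (t : tm G (Dia A)) (u : tm (A :: G) B)
    (u' : tm (B :: G) C),
    teq (tletmap (tletmap t u) u') (tletmap t (subst_under u' u))
| teq_let_letmap : forall G A B C (t : tm G (Dia A)) (u : tm (A :: G) B)
    (u' : tm (B :: G) (Dia C)),
    teq (tlet (tletmap t u) u') (tlet t (subst_under u' u))
| teq_letmap_let : forall G A B C (t : tm G (Dia A)) (u : tm (A :: G) (Dia B))
    (u' : tm (B :: G) C),
    teq (tletmap (tlet t u) u') (tlet t (tletmap u (wk_under A u')))
| teq_let_let : forall G A B C (t : tm G (Dia A)) (u : tm (A :: G) (Dia B))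
    (u' : tm (B :: G) (Dia C)),
    teq (tlet (tlet t u) u') (tlet t (tlet u (wk_under A u'))).

Record Category := {
  Ob : Type;
  Hom : Ob -> Ob -> Type;
  idm : forall X, Hom X X;
  comp : forall X Y Z, Hom Y Z -> Hom X Y -> Hom X Z;   (* comp g f = g o f *)
  comp_id_l : forall X Y (f : Hom X Y), comp (idm Y) f = f;
  comp_id_r : forall X Y (f : Hom X Y), comp f (idm X) = f;
  comp_assoc : forall X Y Z W (f : Hom X Y) (g : Hom Y Z) (h : Hom Z W),
      comp h (comp g f) = comp (comp h g) f
}.
Arguments idm {c} X.
Arguments comp {c X Y Z} _ _.

Record CCC := {
  cat :> Category;
  one : Ob cat;
  bang : forall X, Hom cat X one;
  bang_unique : forall X (f : Hom cat X one), f = bang X;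
  prod : Ob cat -> Ob cat -> Ob cat;
  pi1 : forall X Y, Hom cat (prod X Y) X;
  pi2 : forall X Y, Hom cat (prod X Y) Y;
  pair : forall Z X Y, Hom cat Z X -> Hom cat Z Y -> Hom cat Z (prod X Y);
  pi1_pair : forall Z X Y (f : Hom cat Z X) (g : Hom cat Z Y),
      comp (pi1 X Y) (pair Z X Y f g) = f;
  pi2_pair : forall Z X Y (f : Hom cat Z X) (g : Hom cat Z Y),
      comp (pi2 X Y) (pair Z X Y f g) = g;
  pair_unique : forall Z X Y (f : Hom cat Z X) (g : Hom cat Z Y) (h : Hom cat Z (prod X Y)),
      comp (pi1 X Y) h = f -> comp (pi2 X Y) h = g -> h = pair Z X Y f g;
  exp : Ob cat -> Ob cat -> Ob cat;              (* exp X Y = Y^X *)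
  ev : forall X Y, Hom cat (prod (exp X Y) X) Y;
  curry : forall Z X Y, Hom cat (prod Z X) Y -> Hom cat Z (exp X Y);
  ev_curry : forall Z X Y (f : Hom cat (prod Z X) Y),
      comp (ev X Y) (pair (prod Z X) (exp X Y) X (comp (curry Z X Y f) (pi1 Z X)) (comp (idm X) (pi2 Z X))) = f;
  curry_unique : forall Z X Y (f : Hom cat (prod Z X) Y) (g : Hom cat Z (exp X Y)),
      comp (ev X Y) (pair (prod Z X) (exp X Y) X (comp g (pi1 Z X)) (comp (idm X) (pi2 Z X))) = f ->
      g = curry Z X Y f
}.
Arguments one {c}.
Arguments bang {c} X.
Arguments prod {c} _ _.
Arguments pi1 {c} X Y.
Arguments pi2 {c} X Y.
Arguments pair {c Z X Y} _ _.
Arguments exp {c} _ _.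
Arguments ev {c} X Y.
Arguments curry {c Z X Y} _.

Definition fprod {C : CCC} {X Y X' Y' : Ob C} (f : Hom C X X') (g : Hom C Y Y')
  : Hom C (prod X Y) (prod X' Y') :=
  pair (comp f (pi1 X Y)) (comp g (pi2 X Y)).

Definition assoc {C : CCC} (X Y Z : Ob C) : Hom C (prod (prod X Y) Z) (prod X (prod Y Z)) :=
  pair (comp (pi1 X Y) (pi1 (prod X Y) Z))
       (pair (comp (pi2 X Y) (pi1 (prod X Y) Z)) (pi2 (prod X Y) Z)).

Record SJModel := {
  ccc :> CCC;
  D : Ob ccc -> Ob ccc;
  Dmap : forall X Y, Hom ccc X Y -> Hom ccc (D X) (D Y);
  Dmap_id : forall X, Dmap X X (idm X) = idm (D X);
  Dmap_comp : forall X Y Z (f : Hom ccc X Y) (g : Hom ccc Y Z),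
      Dmap X Z (comp g f) = comp (Dmap Y Z g) (Dmap X Y f);
  st : forall X Y, Hom ccc (prod X (D Y)) (D (prod X Y));
  st_natural : forall X X' Y Y' (f : Hom ccc X X') (g : Hom ccc Y Y'),
      comp (st X' Y') (fprod f (Dmap Y Y' g)) = comp (Dmap (prod X Y) (prod X' Y') (fprod f g)) (st X Y);
  st_unit : forall X,
      comp (Dmap (prod one X) X (pi2 one X)) (st one X) = pi2 one (D X);
  st_assoc : forall X Y Z,
      comp (Dmap _ _ (assoc X Y Z)) (st (prod X Y) Z)
      = comp (st X (prod Y Z)) (comp (fprod (idm X) (st Y Z)) (assoc X Y (D Z)));
  mu : forall X, Hom ccc (D (D X)) (D X);
  mu_natural : forall X Y (f : Hom ccc X Y),
      comp (Dmap X Y f) (mu X) = comp (mu Y) (Dmap _ _ (Dmap X Y f));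
  mu_assoc : forall X, comp (mu X) (mu (D X)) = comp (mu X) (Dmap _ _ (mu X));
  mu_strong : forall X Y,
      comp (mu (prod X Y)) (comp (Dmap _ _ (st X Y)) (st X (D Y)))
      = comp (st X Y) (fprod (idm X) (mu Y))
}.
Arguments D {s} _.
Arguments Dmap {s X Y} _.
Arguments st {s} X Y.
Arguments mu {s} X.

Section Interp.
Variables (M : SJModel) (b : Ob M).

Fixpoint ity (A : ty) : Ob M :=
  match A with
  | Base => b
  | Unit => one
  | Prod A1 A2 => prod (ity A1) (ity A2)
  | Arr A1 A2 => exp (ity A1) (ity A2)
  | Dia A1 => D (ity A1)
  end.

Fixpoint ictx (G : ctx) : Ob M :=
  match G with
  | [] => one
  | A :: G' => prod (ictx G') (ity A)
  end.

Fixpoint ivar {G A} (v : var G A) : Hom M (ictx G) (ity A) :=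
  match v in var G0 A0 return Hom M (ictx G0) (ity A0) with
  | @VZ G0 A0 => pi2 (ictx G0) (ity A0)
  | @VS G0 A0 B0 v' => comp (ivar v') (pi1 (ictx G0) (ity B0))
  end.

Fixpoint interp {G A} (t : tm G A) : Hom M (ictx G) (ity A) :=
  match t in tm G0 A0 return Hom M (ictx G0) (ity A0) with
  | tvar v => ivar v
  | @tunit G0 => bang (ictx G0)
  | tpair t1 t2 => pair (interp t1) (interp t2)
  | @tfst G0 A1 A2 t1 => comp (pi1 (ity A1) (ity A2)) (interp t1)
  | @tsnd G0 A1 A2 t1 => comp (pi2 (ity A1) (ity A2)) (interp t1)
  | tlam t1 => curry (interp t1)
  | @tapp G0 A1 A2 t1 t2 => comp (ev (ity A1) (ity A2)) (pair (interp t1) (interp t2))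
  | @tletmap G0 A1 A2 t1 t2 =>
      comp (Dmap (interp t2))
           (comp (st (ictx G0) (ity A1)) (pair (idm (ictx G0)) (interp t1)))
  | @tlet G0 A1 A2 t1 t2 =>
      comp (mu (ity A2))
        (comp (Dmap (interp t2))
           (comp (st (ictx G0) (ity A1)) (pair (idm (ictx G0)) (interp t1))))
  end.

End Interp.

From Stdlib Require Import List FunctionalExtensionality Program.Equality
  ProofIrrelevance PropExtensionality ClassicalEpsilon Setoid Morphisms JMeq.
Import ListNotations.

(* Soundness: by the substitution lemma (substitution is interpreted by precomposition with the
   interpretation of the substitution), each let-law reduces to naturality and associativity of
   the strength together with naturality, associativity and strength of the multiplication.

   Completeness: terms x : X |- t : Y modulo the equational theory form a cartesian closed
   category with a strong semimonad, with D the type former Dia, and Dmap, strength and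
   multiplication given by letmap and let. In this syntactic model a term G |- t : A is
   interpreted by the class of t itself, its variables replaced by projections out of one
   variable of the product type of G. Substituting the tuple of G's variables back undoes this,
   so equal interpretations in the syntactic model give equal terms. *)

(** * Renaming and substitution *)

Lemma var_case {G B} (P : forall A, var (B :: G) A -> Type)
  (hz : P B VZ) (hs : forall A (v : var G A), P A (VS v)) : forall A v, P A v.
Proof. intros A v. dependent destruction v; auto. Defined.

Lemma var_nil {A} (v : var [] A) : False.
Proof. dependent destruction v. Qed.

Ltac funext_var := apply functional_extensionality_dep; intro; apply functional_extensionality; intro.
Ltac var_cases := match goal with v : var _ ?x |- _ => revert x v end; apply var_case.

(* Under a binder the induction hypothesis is used for the lifted maps, which agree variable
   by variable. *)
Ltac fusion_induction t :=
  induction t; intros; simpl; f_equal; auto;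
  try (match goal with IH : forall D, _ |- _ => rewrite IH end); f_equal; funext_var; var_cases.

Lemma ren_ren {G A} (t : tm G A) : forall D E (r1 : renaming G D) (r2 : renaming D E),
  ren (ren t r1) r2 = ren t (fun C v => r2 C (r1 C v)).
Proof. fusion_induction t; reflexivity. Qed.

Lemma ren_sub {G A} (t : tm G A) : forall D E (s : substitution G D) (r : renaming D E),
  ren (sub t s) r = sub t (fun C v => ren (s C v) r).
Proof.
  fusion_induction t; try reflexivity;
  intros; simpl; unfold wk; rewrite !ren_ren; reflexivity.
Qed.

Lemma sub_ren {G A} (t : tm G A) : forall D E (r : renaming G D) (s : substitution D E),
  sub (ren t r) s = sub t (fun C v => s C (r C v)).
Proof. fusion_induction t; reflexivity. Qed.

Lemma sub_sub {G A} (t : tm G A) : forall D E (s1 : substitution G D) (s2 : substitution D E),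
  sub (sub t s1) s2 = sub t (fun C v => sub (s1 C v) s2).
Proof.
  fusion_induction t; try reflexivity;
  intros; simpl; unfold wk; rewrite sub_ren, ren_sub; reflexivity.
Qed.

Lemma ren_as_sub {G A} (t : tm G A) : forall D (r : renaming G D),
  ren t r = sub t (fun C v => tvar (r C v)).
Proof. fusion_induction t; reflexivity. Qed.

Lemma sub_ids {G A} (t : tm G A) : sub t ids = t.
Proof.
  induction t; simpl; f_equal; auto;
  match goal with H : _ |- _ => rewrite <- H at 2 end; f_equal; funext_var; var_cases; reflexivity.
Qed.

Lemma sub_wk {G D A B} (t : tm G A) (s : substitution G D) :
  sub (wk B t) (@sub_lift _ _ B s) = wk B (sub t s).
Proof. unfold wk. rewrite sub_ren, ren_sub. reflexivity. Qed.

Lemma sub_subst1 {G D A B} (t : tm (B :: G) A) (u : tm G B) (s : substitution G D) :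
  sub (subst1 t u) s = subst1 (sub t (@sub_lift _ _ B s)) (sub u s).
Proof.
  unfold subst1. rewrite !sub_sub. f_equal. funext_var. var_cases; [reflexivity|].
  intros. simpl. unfold wk. rewrite sub_ren. symmetry. apply sub_ids.
Qed.

Lemma sub_subst_under {G D A B C} (u' : tm (B :: G) C) (u : tm (A :: G) B)
  (s : substitution G D) :
  sub (subst_under u' u) (@sub_lift _ _ A s)
  = subst_under (sub u' (@sub_lift _ _ B s)) (sub u (@sub_lift _ _ A s)).
Proof.
  unfold subst_under. rewrite !sub_sub. f_equal. funext_var. var_cases; [reflexivity|].
  intros. simpl. unfold wk. rewrite sub_ren, ren_as_sub. reflexivity.
Qed.

Lemma sub_wk_under {G D A B C} (u' : tm (B :: G) C) (s : substitution G D) :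
  sub (wk_under A u') (@sub_lift _ _ B (@sub_lift _ _ A s))
  = wk_under A (sub u' (@sub_lift _ _ B s)).
Proof.
  unfold wk_under. rewrite sub_ren, ren_sub. f_equal. funext_var. var_cases; [reflexivity|].
  intros. simpl. unfold wk. rewrite !ren_ren. reflexivity.
Qed.

#[export] Instance teq_equivalence G A : Equivalence (@teq G A).
Proof. split; intro; [apply teq_refl | apply teq_sym | apply teq_trans]. Qed.

#[export] Instance tpair_proper G A B :
  Proper (@teq G A ==> @teq G B ==> @teq G (Prod A B)) (@tpair G A B).
Proof. repeat intro. apply teq_pair; auto. Qed.
#[export] Instance tfst_proper G A B : Proper (@teq G (Prod A B) ==> @teq G A) (@tfst G A B).
Proof. repeat intro. apply teq_fst; auto. Qed.
#[export] Instance tsnd_proper G A B : Proper (@teq G (Prod A B) ==> @teq G B) (@tsnd G A B).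
Proof. repeat intro. apply teq_snd; auto. Qed.
#[export] Instance tlam_proper G A B : Proper (@teq (A :: G) B ==> @teq G (Arr A B)) (@tlam G A B).
Proof. repeat intro. apply teq_lam; auto. Qed.
#[export] Instance tapp_proper G A B :
  Proper (@teq G (Arr A B) ==> @teq G A ==> @teq G B) (@tapp G A B).
Proof. repeat intro. apply teq_app; auto. Qed.
#[export] Instance tletmap_proper G A B :
  Proper (@teq G (Dia A) ==> @teq (A :: G) B ==> @teq G (Dia B)) (@tletmap G A B).
Proof. repeat intro. apply teq_letmap; auto. Qed.
#[export] Instance tlet_proper G A B :
  Proper (@teq G (Dia A) ==> @teq (A :: G) (Dia B) ==> @teq G (Dia B)) (@tlet G A B).
Proof. repeat intro. apply teq_let; auto. Qed.

Lemma eq_teq {G A} (t u : tm G A) : t = u -> teq t u.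
Proof. intros ->. reflexivity. Qed.

Lemma teq_sub {G A} (t u : tm G A) (H : teq t u) : forall D (s : substitution G D),
  teq (sub t s) (sub u s).
Proof.
  induction H; intros; simpl.
  all: first [ solve [econstructor; eauto]
  | rewrite sub_wk; apply teq_lam_eta
  | rewrite sub_subst1; apply teq_lam_beta
  | rewrite sub_subst_under; apply teq_letmap_letmap
  | rewrite sub_subst_under; apply teq_let_letmap
  | rewrite sub_wk_under; apply teq_letmap_let
  | rewrite sub_wk_under; apply teq_let_let
  | apply (teq_letmap_id (sub t s)) ].
Qed.

#[export] Instance sub_proper G A :
  Proper (@teq G A ==> forall_relation (fun D => eq ==> @teq D A)) (@sub G A).
Proof. intros t u H D s s' <-. apply teq_sub, H. Qed.

Lemma teq_ren {G A} (t u : tm G A) (H : teq t u) D (r : renaming G D) :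
  teq (ren t r) (ren u r).
Proof. rewrite !ren_as_sub. apply teq_sub; auto. Qed.

Lemma teq_sub_cong {G A} (t : tm G A) : forall D (s s' : substitution G D),
  (forall C v, teq (s C v) (s' C v)) -> teq (sub t s) (sub t s').
Proof.
  assert (lift_cong : forall G D B (s s' : substitution G D),
    (forall C v, teq (s C v) (s' C v)) -> forall C v, teq (@sub_lift _ _ B s C v) (sub_lift s' v)).
  { intros G0 D0 B s0 s0' H0. apply var_case; simpl; [reflexivity|].
    intros; unfold wk; apply teq_ren; auto. }
  induction t; intros; simpl; auto; constructor; auto; (apply IHt || apply IHt2); auto.
Qed.

(** * Cartesian closed categories and strong semimonads *)

Section CCCFacts.
Context {C : CCC}.

Lemma comp_pair {Z X Y W : Ob C} (f : Hom C Z X) (g : Hom C Z Y) (h : Hom C W Z) :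
  comp (pair f g) h = pair (comp f h) (comp g h).
Proof. apply pair_unique; rewrite comp_assoc; rewrite ?pi1_pair, ?pi2_pair; auto. Qed.

Lemma pi1_pair_comp {Z X Y W : Ob C} (f : Hom C Z X) (g : Hom C Z Y) (h : Hom C W Z) :
  comp (pi1 X Y) (comp (pair f g) h) = comp f h.
Proof. rewrite comp_assoc, pi1_pair; auto. Qed.

Lemma pi2_pair_comp {Z X Y W : Ob C} (f : Hom C Z X) (g : Hom C Z Y) (h : Hom C W Z) :
  comp (pi2 X Y) (comp (pair f g) h) = comp g h.
Proof. rewrite comp_assoc, pi2_pair; auto. Qed.

Lemma pair_pi {X Y : Ob C} : pair (pi1 X Y) (pi2 X Y) = idm (prod X Y).
Proof. symmetry. apply pair_unique; apply comp_id_r. Qed.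

Lemma hom_one_eq {X : Ob C} (f g : Hom C X one) : f = g.
Proof. rewrite (bang_unique _ _ f), (bang_unique _ _ g). auto. Qed.

Lemma ev_curry_pair {Z X Y W : Ob C} (f : Hom C (prod Z X) Y) (g : Hom C W Z) (k : Hom C W X) :
  comp (ev X Y) (pair (comp (curry f) g) k) = comp f (pair g k).
Proof.
  rewrite <- (ev_curry _ _ _ _ f) at 2. rewrite <- comp_assoc, comp_pair.
  rewrite <- !comp_assoc, pi1_pair, pi2_pair, comp_id_l. auto.
Qed.

End CCCFacts.

Ltac cat_simpl :=
  repeat (rewrite ?comp_id_l, ?comp_id_r, <- ?comp_assoc, ?pi1_pair, ?pi2_pair,
   ?pi1_pair_comp, ?pi2_pair_comp, ?comp_pair, ?pair_pi; unfold fprod, assoc).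

(* [strong t] pairs the effectful result of [t] with the context it ran in; it is the common
   prefix of the interpretations of [letmap] and [let]. *)
Notation strong t := (comp (st _ _) (pair (idm _) t)).

Section StrongSemimonad.
Variable M : SJModel.

(* The unit law [st_unit] transported along [bang X] by naturality. *)
Lemma Dmap_pi2_st (X Y : Ob M) : comp (Dmap (pi2 X Y)) (st X Y) = pi2 X (D Y).
Proof.
  pose proof (st_natural M _ _ _ _ (bang X) (idm Y)) as H.
  rewrite Dmap_id in H.
  assert (E : pi2 X Y = comp (pi2 one Y) (fprod (bang X) (idm Y))) by (cat_simpl; auto).
  rewrite E, Dmap_comp, <- comp_assoc, <- H, comp_assoc, st_unit. cat_simpl; auto.
Qed.

Lemma st_natural_comp (X X' Y Y' W : Ob M) (f : Hom M X X') (g : Hom M Y Y')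
  (h : Hom M W (prod X (D Y))) :
  comp (st X' Y') (comp (fprod f (Dmap g)) h) = comp (Dmap (fprod f g)) (comp (st X Y) h).
Proof. rewrite comp_assoc, st_natural, <- comp_assoc. auto. Qed.

Lemma st_assoc_comp (X Y Z W : Ob M) (h : Hom M W (prod (prod X Y) (D Z))) :
  comp (st X (prod Y Z)) (comp (fprod (idm X) (st Y Z)) (comp (assoc X Y (D Z)) h))
  = comp (Dmap (assoc X Y Z)) (comp (st (prod X Y) Z) h).
Proof.
  transitivity (comp (comp (st X (prod Y Z)) (comp (fprod (idm X) (st Y Z)) (assoc X Y (D Z)))) h).
  { rewrite <- !comp_assoc. auto. }
  rewrite <- st_assoc, <- comp_assoc. auto.
Qed.

Lemma mu_natural_comp (X Y W : Ob M) (f : Hom M X Y) (h : Hom M W (D (D X))) :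
  comp (Dmap f) (comp (mu X) h) = comp (mu Y) (comp (Dmap (Dmap f)) h).
Proof. rewrite comp_assoc, mu_natural, <- comp_assoc. auto. Qed.

Lemma mu_assoc_comp (X W : Ob M) (h : Hom M W (D (D (D X)))) :
  comp (mu X) (comp (mu (D X)) h) = comp (mu X) (comp (Dmap (mu X)) h).
Proof. rewrite comp_assoc, mu_assoc, <- comp_assoc. auto. Qed.

Lemma strong_natural {G E A : Ob M} (s : Hom M E G) (t : Hom M G (D A)) :
  comp (Dmap (fprod s (idm A))) (strong (comp t s)) = comp (st G A) (comp (pair (idm G) t) s).
Proof.
  pose proof (st_natural M _ _ _ _ s (idm A)) as H. rewrite Dmap_id in H.
  rewrite comp_assoc, <- H. cat_simpl. auto.
Qed.

(* Both sides become [Dmap _ o st o <<id, id>, t>]: naturality of [st], its associativity,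
   then naturality along the diagonal. *)
Lemma strong_Dmap (G A B : Ob M) (u : Hom M (prod G A) B) (t : Hom M G (D A)) :
  strong (comp (Dmap u) (strong t)) = comp (Dmap (pair (pi1 G A) u)) (strong t).
Proof.
  set (S := strong t).
  assert (E1 : pair (idm G) (comp (Dmap u) S) = comp (fprod (idm G) (Dmap u)) (pair (idm G) S))
    by (cat_simpl; auto).
  rewrite E1, st_natural_comp.
  assert (E2 : comp (st G (prod G A)) (pair (idm G) S)
             = comp (st G (prod G A)) (comp (fprod (idm G) (st G A))
                 (comp (assoc G G (D A)) (pair (pair (idm G) (idm G)) t))))
    by (f_equal; unfold S; cat_simpl; auto).
  rewrite E2, st_assoc_comp.
  assert (E3 : pair (pair (idm G) (idm G)) t
             = comp (fprod (pair (idm G) (idm G)) (Dmap (idm A))) (pair (idm G) t))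
    by (rewrite Dmap_id; cat_simpl; auto).
  rewrite E3, st_natural_comp. fold S.
  rewrite !comp_assoc, <- !Dmap_comp.
  f_equal. f_equal. cat_simpl. auto.
Qed.

Lemma Dmap_st_pi1 (G A B C : Ob M) (u' : Hom M (prod G B) C) (u : Hom M (prod G A) (D B)) :
  comp (Dmap u') (comp (st G B) (pair (pi1 G A) u))
  = comp (Dmap (comp u' (fprod (pi1 G A) (idm B)))) (strong u).
Proof.
  assert (E : pair (pi1 G A) u = comp (fprod (pi1 G A) (Dmap (idm B))) (pair (idm _) u))
    by (rewrite Dmap_id; cat_simpl; auto).
  rewrite E, st_natural_comp, Dmap_comp, <- comp_assoc. auto.
Qed.

Lemma strong_mu (G B : Ob M) (h : Hom M G (D (D B))) :
  strong (comp (mu B) h) = comp (mu _) (comp (Dmap (st G B)) (strong h)).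
Proof.
  assert (E : pair (idm G) (comp (mu B) h) = comp (fprod (idm G) (mu B)) (pair (idm G) h))
    by (cat_simpl; auto).
  rewrite E, comp_assoc, <- mu_strong, <- !comp_assoc. auto.
Qed.

End StrongSemimonad.

(** * Soundness *)

Section Soundness.
Variables (M : SJModel) (b : Ob M).
Notation I := (interp M b).
Notation IC := (ictx M b).

Fixpoint iren {G D} : renaming G D -> Hom M (IC D) (IC G) :=
  match G return renaming G D -> Hom M (IC D) (IC G) with
  | [] => fun _ => bang _
  | A :: G' => fun r => pair (iren (fun C v => r C (VS v))) (ivar M b (r A VZ))
  end.

Fixpoint isub {G D} : substitution G D -> Hom M (IC D) (IC G) :=
  match G return substitution G D -> Hom M (IC D) (IC G) with
  | [] => fun _ => bang _
  | A :: G' => fun s => pair (isub (fun C v => s C (VS v))) (I (s A VZ))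
  end.

Lemma ivar_ren {G A} (v : var G A) : forall D (r : renaming G D),
  ivar M b (r A v) = comp (ivar M b v) (iren r).
Proof. induction v; intros; simpl; cat_simpl; auto. rewrite <- IHv. auto. Qed.

Lemma ivar_sub {G A} (v : var G A) : forall D (s : substitution G D),
  I (s A v) = comp (ivar M b v) (isub s).
Proof. induction v; intros; simpl; cat_simpl; auto. rewrite <- IHv. auto. Qed.

Lemma iren_VS {G D B} (r : renaming G D) :
  iren (fun C v => @VS D C B (r C v)) = comp (iren r) (pi1 _ _).
Proof.
  induction G; simpl.
  - apply hom_one_eq.
  - cat_simpl. f_equal. apply (IHG (fun C v => r C (VS v))).
Qed.

Lemma iren_id {G} : iren (fun C (v : var G C) => v) = idm (IC G).
Proof.
  induction G; simpl; [apply hom_one_eq|].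
  rewrite (iren_VS (fun C (v : var G C) => v)), IHG. cat_simpl. auto.
Qed.

Lemma iren_lift {G D B} (r : renaming G D) :
  iren (@ren_lift _ _ B r) = fprod (iren r) (idm _).
Proof. simpl. rewrite (iren_VS r). cat_simpl. auto. Qed.

(* The two substitution lemmas share their proof: only the variable case and the
   interpretation of the lifted map differ. *)
Ltac interp_subst_induction t ivar_lemma lift_lemma :=
  induction t; intros; simpl;
  [ apply ivar_lemma | apply hom_one_eq
  | match goal with IH1 : _, IH2 : _ |- _ => rewrite IH1, IH2; cat_simpl; auto end
  | match goal with IH : _ |- _ => rewrite IH; cat_simpl; auto end
  | match goal with IH : _ |- _ => rewrite IH; cat_simpl; auto end
  | match goal with IH : _ |- _ => rewrite IH, lift_lemma end; symmetry; apply curry_unique;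
    cat_simpl; rewrite !ev_curry_pair; cat_simpl; auto
  | match goal with IH1 : _, IH2 : _ |- _ => rewrite IH1, IH2; cat_simpl; auto end
  | ..];
  match goal with IH1 : _, IH2 : _ |- _ =>
    rewrite IH1, IH2, lift_lemma, Dmap_comp, <- !comp_assoc end;
  rewrite <- ?comp_assoc; repeat f_equal; apply strong_natural.

Lemma interp_ren {G A} (t : tm G A) : forall D (r : renaming G D),
  I (ren t r) = comp (I t) (iren r).
Proof. interp_subst_induction t @ivar_ren @iren_lift. Qed.

Lemma interp_wk {G A B} (t : tm G A) : I (wk B t) = comp (I t) (pi1 _ _).
Proof.
  unfold wk. rewrite interp_ren. f_equal.
  rewrite (iren_VS (fun C (v : var G C) => v)), iren_id. cat_simpl. auto.
Qed.

Lemma isub_wk {G D B} (s : substitution G D) :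
  isub (fun C v => wk B (s C v)) = comp (isub s) (pi1 _ _).
Proof.
  induction G; simpl; [apply hom_one_eq|].
  cat_simpl. rewrite interp_wk. f_equal. apply (IHG (fun C v => s C (VS v))).
Qed.

Lemma isub_lift {G D B} (s : substitution G D) :
  isub (@sub_lift _ _ B s) = fprod (isub s) (idm _).
Proof. simpl. rewrite (isub_wk s). cat_simpl. auto. Qed.

Lemma isub_ids {G} : isub (@ids G) = idm (IC G).
Proof.
  induction G; simpl; [apply hom_one_eq|].
  change (fun C (v : var G C) => @ids (a :: G) C (VS v)) with (fun C v => wk a (@ids G C v)).
  rewrite isub_wk, IHG. cat_simpl. auto.
Qed.

Lemma interp_sub {G A} (t : tm G A) : forall D (s : substitution G D),
  I (sub t s) = comp (I t) (isub s).
Proof. interp_subst_induction t @ivar_sub @isub_lift. Qed.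

Lemma interp_subst1 {G A B} (t : tm (B :: G) A) (u : tm G B) :
  I (subst1 t u) = comp (I t) (pair (idm _) (I u)).
Proof.
  unfold subst1. rewrite interp_sub. simpl.
  change (fun C (v : var G C) => scons u ids (VS v)) with (@ids G). rewrite isub_ids. auto.
Qed.

Lemma interp_subst_under {G A B C} (u' : tm (B :: G) C) (u : tm (A :: G) B) :
  I (subst_under u' u) = comp (I u') (pair (pi1 _ _) (I u)).
Proof.
  unfold subst_under. rewrite interp_sub. f_equal. simpl. f_equal.
  change (fun C0 (v : var G C0) => tvar (@VS _ C0 A v))
    with (fun C0 (v : var G C0) => wk A (@ids G C0 v)).
  rewrite isub_wk, isub_ids. cat_simpl. auto.
Qed.

Lemma interp_wk_under {G B C} A (u' : tm (B :: G) C) :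
  I (wk_under A u') = comp (I u') (fprod (pi1 _ _) (idm _)).
Proof.
  unfold wk_under. rewrite interp_ren, iren_lift. f_equal. f_equal.
  rewrite (iren_VS (fun C (v : var G C) => v)), iren_id. cat_simpl. auto.
Qed.

Theorem soundness {G A} (t u : tm G A) : teq t u -> I t = I u.
Proof.
  induction 1; simpl; try congruence.
  - apply hom_one_eq.
  - apply pair_unique; auto.
  - apply pi1_pair.
  - apply pi2_pair.
  - apply curry_unique. rewrite interp_wk. cat_simpl. auto.
  - rewrite interp_subst1, <- (comp_id_r _ _ _ (curry _)), ev_curry_pair. auto.
  - rewrite comp_assoc, Dmap_pi2_st. cat_simpl. auto.
  - rewrite strong_Dmap, interp_subst_under, Dmap_comp, <- comp_assoc. auto.
  - rewrite !strong_Dmap, interp_subst_under, Dmap_comp, <- !comp_assoc. auto.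
  - rewrite interp_wk_under, <- Dmap_st_pi1, strong_mu, strong_Dmap, !Dmap_comp,
      <- !comp_assoc, mu_natural_comp. auto.
  - rewrite interp_wk_under, <- Dmap_st_pi1, strong_mu, strong_Dmap, !Dmap_comp,
      <- !comp_assoc, mu_natural_comp, mu_assoc_comp. auto.
Qed.

End Soundness.

(** * The syntactic model *)

Notation x0 := (tvar VZ).
Notation x1 := (tvar (VS VZ)).

Definition nosub {D} : substitution [] D := fun C v => False_rect _ (var_nil v).

Lemma sub_one_ext {X Y D} (f : tm [X] Y) (s1 s2 : substitution [X] D) :
  s1 X VZ = s2 X VZ -> sub f s1 = sub f s2.
Proof. intro H. f_equal. funext_var. var_cases; auto. intros. destruct (var_nil v). Qed.

Lemma teq_sub_one {X Y D} (f : tm [X] Y) (s1 s2 : substitution [X] D) :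
  teq (s1 X VZ) (s2 X VZ) -> teq (sub f s1) (sub f s2).
Proof. intro H. apply teq_sub_cong. apply var_case; auto. intros. destruct (var_nil v). Qed.

Lemma sub_one_var {X Y} (f : tm [X] Y) : sub f (scons x0 nosub) = f.
Proof. rewrite <- (sub_ids f) at 2. apply sub_one_ext. auto. Qed.

Lemma wk_as_sub_one {X Y B} (g : tm [X] Y) : wk B g = sub g (scons x1 nosub).
Proof. unfold wk. rewrite ren_as_sub. apply sub_one_ext. reflexivity. Qed.

Definition tcomp {X Y Z} (g : tm [Y] Z) (f : tm [X] Y) : tm [X] Z := sub g (scons f nosub).
Definition tcurry {Z X Y} (f : tm [Prod Z X] Y) : tm [Z] (Arr X Y) :=
  tlam (sub f (scons (tpair x1 x0) nosub)).
Definition tDmap {X Y} (f : tm [X] Y) : tm [Dia X] (Dia Y) :=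
  tletmap x0 (sub f (scons x0 nosub)).
Definition tst {X Y} : tm [Prod X (Dia Y)] (Dia (Prod X Y)) :=
  tletmap (tsnd x0) (tpair (tfst x1) x0).
Definition tmu {X} : tm [Dia (Dia X)] (Dia X) := tlet x0 x0.

Lemma tcomp_teq {X Y Z} (g g' : tm [Y] Z) (f f' : tm [X] Y) :
  teq g g' -> teq f f' -> teq (tcomp g f) (tcomp g' f').
Proof. intros. transitivity (tcomp g' f); [apply teq_sub | apply teq_sub_one]; auto. Qed.

Lemma tcomp_assoc {X Y Z W} (f : tm [X] Y) (g : tm [Y] Z) (h : tm [Z] W) :
  tcomp h (tcomp g f) = tcomp (tcomp h g) f.
Proof. unfold tcomp. rewrite sub_sub. apply sub_one_ext. reflexivity. Qed.

Lemma tev_tcurry {Z X Y} (f : tm [Prod Z X] Y) :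
  teq (tcomp (tapp (tfst x0) (tsnd x0)) (tpair (tcomp (tcurry f) (tfst x0)) (tcomp x0 (tsnd x0)))) f.
Proof.
  unfold tcomp, tcurry. simpl.
  rewrite teq_fst_beta, teq_snd_beta, teq_lam_beta. unfold subst1. rewrite !sub_sub.
  rewrite <- (sub_one_var f) at 2. apply teq_sub_one. simpl. symmetry. apply teq_pair_eta.
Qed.

Lemma tcurry_unique {Z X Y} (f : tm [Prod Z X] Y) (g : tm [Z] (Arr X Y)) :
  teq (tcomp (tapp (tfst x0) (tsnd x0)) (tpair (tcomp g (tfst x0)) (tcomp x0 (tsnd x0)))) f ->
  teq g (tcurry f).
Proof.
  intro H. unfold tcurry. rewrite <- H.
  transitivity (tlam (tapp (wk X g) x0)); [apply teq_lam_eta|].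
  unfold tcomp. simpl. rewrite teq_fst_beta, teq_snd_beta, wk_as_sub_one, sub_sub.
  apply teq_lam, teq_app; [|symmetry; apply teq_snd_beta].
  apply teq_sub_one. simpl. symmetry. apply teq_fst_beta.
Qed.

(* A morphism X -> Y of the syntactic model is a class of terms [x : X |- t : Y] modulo [teq],
   represented as the predicate of membership in the class. *)
Record tm_class (X Y : ty) :=
  { members : tm [X] Y -> Prop; members_class : exists t, members = teq t }.
Arguments members {X Y}.
Arguments members_class {X Y}.

Definition cls {X Y} (t : tm [X] Y) : tm_class X Y :=
  {| members := teq t; members_class := ex_intro _ t eq_refl |}.

Lemma cls_eq {X Y} (t u : tm [X] Y) : teq t u -> cls t = cls u.
Proof.
  intro H. unfold cls.
  assert (E : teq t = teq u).
  { apply functional_extensionality; intro w. apply propositional_extensionality.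
    rewrite H. reflexivity. }
  generalize (ex_intro (fun t0 => teq t = teq t0) t eq_refl).
  generalize (ex_intro (fun t0 => teq u = teq t0) u eq_refl).
  rewrite E. intros. f_equal. apply proof_irrelevance.
Qed.

Lemma cls_inj {X Y} (t u : tm [X] Y) : cls t = cls u -> teq t u.
Proof. intro H. apply (f_equal members) in H. simpl in H. rewrite H. reflexivity. Qed.

Definition repr {X Y} (h : tm_class X Y) : tm [X] Y :=
  proj1_sig (constructive_indefinite_description _ (members_class h)).

Lemma cls_repr {X Y} (h : tm_class X Y) : cls (repr h) = h.
Proof.
  unfold repr. destruct (constructive_indefinite_description _ (members_class h)) as [t E].
  destruct h as [P HP]. simpl in *. subst P. unfold cls. f_equal. apply proof_irrelevance.
Qed.

Lemma repr_cls {X Y} (t : tm [X] Y) : teq (repr (cls t)) t.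
Proof. apply cls_inj, cls_repr. Qed.

Definition cls_lift1 {X Y X' Y'} (F : tm [X] Y -> tm [X'] Y') (h : tm_class X Y)
  : tm_class X' Y' := cls (F (repr h)).

Lemma cls_lift1_cls {X Y X' Y'} (F : tm [X] Y -> tm [X'] Y')
  (HF : forall t u, teq t u -> teq (F t) (F u)) t : cls_lift1 F (cls t) = cls (F t).
Proof. apply cls_eq, HF, repr_cls. Qed.

Definition cls_lift2 {X Y X' Y' X'' Y''} (F : tm [X] Y -> tm [X'] Y' -> tm [X''] Y'')
  (h : tm_class X Y) (k : tm_class X' Y') : tm_class X'' Y'' := cls (F (repr h) (repr k)).

Lemma cls_lift2_cls {X Y X' Y' X'' Y''} (F : tm [X] Y -> tm [X'] Y' -> tm [X''] Y'')
  (HF : forall t u t' u', teq t u -> teq t' u' -> teq (F t t') (F u u')) t t' :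
  cls_lift2 F (cls t) (cls t') = cls (F t t').
Proof. apply cls_eq, HF; apply repr_cls. Qed.

Definition qcomp {X Y Z} (g : tm_class Y Z) (f : tm_class X Y) : tm_class X Z :=
  cls_lift2 tcomp g f.
Definition qpair {Z X Y} (f : tm_class Z X) (g : tm_class Z Y) : tm_class Z (Prod X Y) :=
  cls_lift2 (fun a b => tpair a b) f g.
Definition qcurry {Z X Y} (f : tm_class (Prod Z X) Y) : tm_class Z (Arr X Y) := cls_lift1 tcurry f.
Definition qDmap {X Y} (f : tm_class X Y) : tm_class (Dia X) (Dia Y) := cls_lift1 tDmap f.

Lemma qcomp_cls {X Y Z} (g : tm [Y] Z) (f : tm [X] Y) : qcomp (cls g) (cls f) = cls (tcomp g f).
Proof. apply cls_lift2_cls, tcomp_teq. Qed.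

Lemma qpair_cls {Z X Y} (f : tm [Z] X) (g : tm [Z] Y) : qpair (cls f) (cls g) = cls (tpair f g).
Proof. apply cls_lift2_cls. intros; apply teq_pair; auto. Qed.

Lemma qcurry_cls {Z X Y} (f : tm [Prod Z X] Y) : qcurry (cls f) = cls (tcurry f).
Proof. apply cls_lift1_cls. intros. apply teq_lam, teq_sub; auto. Qed.

Lemma qDmap_cls {X Y} (f : tm [X] Y) : qDmap (cls f) = cls (tDmap f).
Proof. apply cls_lift1_cls. intros. apply teq_letmap; [reflexivity | apply teq_sub; auto]. Qed.

(* Replaces every morphism of the syntactic model under the goal's binders by the class of a
   representative and computes the operations on classes. *)
Ltac cls_simpl :=
  repeat match goal with |- forall h : ?T, _ =>
    let T' := eval hnf in T in match T' with
    | ty => intro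
    | tm_class _ _ => let x := fresh "h" in intro x; change T' in x; rewrite <- (cls_repr x);
        generalize (repr x); clear x; intro
    end end;
  unfold fprod, assoc; simpl;
  repeat (rewrite ?qpair_cls, ?qcurry_cls, ?qDmap_cls, ?qcomp_cls).

Ltac let_simpl := unfold tcomp, tDmap, tst, tmu; simpl;
  repeat (rewrite ?teq_fst_beta, ?teq_snd_beta, ?teq_letmap_letmap, ?teq_let_letmap,
   ?teq_letmap_let, ?teq_let_let; unfold subst_under, wk_under, wk; simpl).

Ltac sub_simpl := repeat (rewrite ?ren_as_sub, ?sub_sub; simpl).

Definition term_category : Category.
Proof.
  refine {| Ob := ty; Hom := tm_class; idm := fun X => cls x0; comp := @qcomp |}.
  - cls_simpl. reflexivity.
  - cls_simpl. unfold tcomp. rewrite sub_one_var. reflexivity.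
  - cls_simpl. rewrite tcomp_assoc. reflexivity.
Defined.

Definition term_ccc : CCC.
Proof.
  refine {| cat := term_category; one := Unit; bang := fun X => cls tunit; prod := Prod;
            pi1 := fun X Y => cls (tfst x0); pi2 := fun X Y => cls (tsnd x0); pair := @qpair;
            exp := Arr; ev := fun X Y => cls (tapp (tfst x0) (tsnd x0)); curry := @qcurry |}.
  - cls_simpl. apply cls_eq, teq_unit_eta.
  - cls_simpl. apply cls_eq, teq_fst_beta.
  - cls_simpl. apply cls_eq, teq_snd_beta.
  - cls_simpl. intros H1%cls_inj H2%cls_inj. apply cls_eq.
    rewrite teq_pair_eta. apply teq_pair; auto.
  - cls_simpl. apply cls_eq, tev_tcurry.
  - cls_simpl. intros H%cls_inj. apply cls_eq, tcurry_unique, H.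
Defined.

(* Each semimonad law becomes an instance of the letmap/let laws once the substitutions
   are computed. *)
Definition term_model : SJModel.
Proof.
  refine {| ccc := term_ccc; D := Dia; Dmap := @qDmap;
            st := fun X Y => cls tst; mu := fun X => cls tmu |}.
  all: cls_simpl; apply cls_eq; let_simpl; sub_simpl.
  all: repeat first [ reflexivity | symmetry; apply teq_letmap_id
    | apply teq_sub_one; simpl; sub_simpl; rewrite ?teq_fst_beta, ?teq_snd_beta
    | f_equiv ].
Defined.

(** * Completeness *)

Notation ity_syn := (ity term_model Base).

Fixpoint ity_var {G A} (v : var G A) : var (map ity_syn G) (ity_syn A) :=
  match v in var G0 A0 return var (map ity_syn G0) (ity_syn A0) with
  | VZ => VZ
  | VS v' => VS (ity_var v')
  end.

(* Retypes a term along the interpretation of types in the syntactic model, which is the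
   identity on types, but only propositionally (see [ity_tm_JMeq]). *)
Fixpoint ity_tm {G A} (t : tm G A) : tm (map ity_syn G) (ity_syn A) :=
  match t in tm G0 A0 return tm (map ity_syn G0) (ity_syn A0) with
  | tvar v => tvar (ity_var v)
  | tunit => tunit
  | tpair t1 t2 => tpair (ity_tm t1) (ity_tm t2)
  | tfst t1 => tfst (ity_tm t1)
  | tsnd t1 => tsnd (ity_tm t1)
  | tlam t1 => tlam (ity_tm t1)
  | tapp t1 t2 => tapp (ity_tm t1) (ity_tm t2)
  | tletmap t1 t2 => tletmap (ity_tm t1) (ity_tm t2)
  | tlet t1 t2 => tlet (ity_tm t1) (ity_tm t2)
  end.

(* A context is interpreted as a single variable of the iterated product type;
   [ctx_proj G] sends each variable of [G] to the corresponding projection of it. *)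
Fixpoint ctx_proj (G : ctx) : substitution (map ity_syn G) [ictx term_model Base G] :=
  match G return substitution (map ity_syn G) [ictx term_model Base G] with
  | [] => nosub
  | A :: G' => scons (tsnd x0) (fun C v => sub (ctx_proj G' C v) (scons (tfst x0) nosub))
  end.

Lemma ctx_proj_lift G A : forall C (v : var (ity_syn A :: map ity_syn G) C),
  teq (sub (ctx_proj (A :: G) C v) (scons (tpair x1 x0) nosub)) (sub_lift (ctx_proj G) v).
Proof.
  apply var_case; simpl.
  - apply teq_snd_beta.
  - intros. unfold wk. rewrite sub_sub, ren_as_sub. apply teq_sub_one. apply teq_fst_beta.
Qed.

Lemma ivar_term_model {G A} (v : var G A) :
  ivar term_model Base v = cls (ctx_proj G _ (ity_var v)).
Proof.
  induction v; simpl; [reflexivity|].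
  rewrite IHv, qcomp_cls. reflexivity.
Qed.

Lemma interp_term_model {G A} (t : tm G A) :
  interp term_model Base t = cls (sub (ity_tm t) (ctx_proj G)).
Proof.
  induction t; simpl.
  (* [tletmap] and [tlet] *)
  8-9: rewrite IHt1, IHt2, qpair_cls, qDmap_cls, !qcomp_cls;
    apply cls_eq; let_simpl; (apply teq_letmap || apply teq_let); [apply teq_snd_beta|];
    rewrite !sub_sub; apply teq_sub_cong; apply var_case;
    [|intros; simpl; unfold wk; rewrite !sub_sub, !ren_as_sub; apply teq_sub_one];
    let_simpl; reflexivity.
  - apply ivar_term_model.
  - reflexivity.
  - rewrite IHt1, IHt2. apply qpair_cls.
  - rewrite IHt, qcomp_cls. reflexivity.
  - rewrite IHt, qcomp_cls. reflexivity.
  - rewrite IHt. etransitivity; [apply qcurry_cls|]. apply cls_eq. unfold tcurry. apply teq_lam.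
    rewrite sub_sub. apply teq_sub_cong. apply ctx_proj_lift.
  - rewrite IHt1, IHt2. rewrite qpair_cls, qcomp_cls. apply cls_eq.
    unfold tcomp. let_simpl. reflexivity.
Qed.

Fixpoint ctx_tuple (G : ctx) : tm (map ity_syn G) (ictx term_model Base G) :=
  match G return tm (map ity_syn G) (ictx term_model Base G) with
  | [] => tunit
  | A :: G' => tpair (wk (ity_syn A) (ctx_tuple G')) x0
  end.

Lemma ctx_proj_tuple G : forall C (v : var (map ity_syn G) C),
  teq (sub (ctx_proj G C v) (scons (ctx_tuple G) nosub)) (tvar v).
Proof.
  induction G; simpl.
  - intros C v. destruct (var_nil v).
  - apply var_case; simpl; [apply teq_snd_beta|].
    intros C v. rewrite sub_sub.
    transitivity (sub (ctx_proj G C v) (scons (wk (ity_syn a) (ctx_tuple G)) nosub)).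
    { apply teq_sub_one. apply teq_fst_beta. }
    transitivity (wk (ity_syn a) (sub (ctx_proj G C v) (scons (ctx_tuple G) nosub))).
    { apply eq_teq. unfold wk. rewrite ren_sub. apply sub_one_ext. reflexivity. }
    apply (teq_ren _ _ (IHG C v)).
Qed.

Lemma ity_term_model A : ity_syn A = A.
Proof. induction A; simpl; congruence. Qed.

Lemma map_ity_term_model G : map ity_syn G = G.
Proof. induction G; simpl; f_equal; auto using ity_term_model. Qed.

Ltac JMeq_congr := intros; subst;
  repeat match goal with H : JMeq _ _ |- _ => apply JMeq_eq in H; subst end; reflexivity.

Lemma VZ_JMeq G G' A A' : G = G' -> A = A' -> JMeq (@VZ G A) (@VZ G' A').
Proof. JMeq_congr. Qed.
Lemma VS_JMeq G G' A A' B B' (v : var G A) (v' : var G' A') :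
  G = G' -> A = A' -> B = B' -> JMeq v v' -> JMeq (@VS G A B v) (@VS G' A' B' v').
Proof. JMeq_congr. Qed.
Lemma tvar_JMeq G G' A A' (v : var G A) (v' : var G' A') :
  G = G' -> A = A' -> JMeq v v' -> JMeq (tvar v) (tvar v').
Proof. JMeq_congr. Qed.
Lemma tunit_JMeq G G' : G = G' -> JMeq (@tunit G) (@tunit G').
Proof. JMeq_congr. Qed.
Lemma tpair_JMeq G G' A A' B B' (t : tm G A) (t' : tm G' A') (u : tm G B) (u' : tm G' B') :
  G = G' -> A = A' -> B = B' -> JMeq t t' -> JMeq u u' -> JMeq (tpair t u) (tpair t' u').
Proof. JMeq_congr. Qed.
Lemma tfst_JMeq G G' A A' B B' (t : tm G (Prod A B)) (t' : tm G' (Prod A' B')) :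
  G = G' -> A = A' -> B = B' -> JMeq t t' -> JMeq (tfst t) (tfst t').
Proof. JMeq_congr. Qed.
Lemma tsnd_JMeq G G' A A' B B' (t : tm G (Prod A B)) (t' : tm G' (Prod A' B')) :
  G = G' -> A = A' -> B = B' -> JMeq t t' -> JMeq (tsnd t) (tsnd t').
Proof. JMeq_congr. Qed.
Lemma tlam_JMeq G G' A A' B B' (t : tm (A :: G) B) (t' : tm (A' :: G') B') :
  G = G' -> A = A' -> B = B' -> JMeq t t' -> JMeq (tlam t) (tlam t').
Proof. JMeq_congr. Qed.
Lemma tapp_JMeq G G' A A' B B' (t : tm G (Arr A B)) (t' : tm G' (Arr A' B'))
  (u : tm G A) (u' : tm G' A') :
  G = G' -> A = A' -> B = B' -> JMeq t t' -> JMeq u u' -> JMeq (tapp t u) (tapp t' u').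
Proof. JMeq_congr. Qed.
Lemma tletmap_JMeq G G' A A' B B' (t : tm G (Dia A)) (t' : tm G' (Dia A'))
  (u : tm (A :: G) B) (u' : tm (A' :: G') B') :
  G = G' -> A = A' -> B = B' -> JMeq t t' -> JMeq u u' -> JMeq (tletmap t u) (tletmap t' u').
Proof. JMeq_congr. Qed.
Lemma tlet_JMeq G G' A A' B B' (t : tm G (Dia A)) (t' : tm G' (Dia A'))
  (u : tm (A :: G) (Dia B)) (u' : tm (A' :: G') (Dia B')) :
  G = G' -> A = A' -> B = B' -> JMeq t t' -> JMeq u u' -> JMeq (tlet t u) (tlet t' u').
Proof. JMeq_congr. Qed.

Lemma ity_var_JMeq {G A} (v : var G A) : JMeq (ity_var v) v.
Proof.
  induction v; [apply VZ_JMeq | apply VS_JMeq]; auto using map_ity_term_model, ity_term_model.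
Qed.

Lemma ity_tm_JMeq {G A} (t : tm G A) : JMeq (ity_tm t) t.
Proof.
  induction t;
  first [ apply tvar_JMeq | apply tunit_JMeq | apply tpair_JMeq | apply tfst_JMeq
        | apply tsnd_JMeq | apply tlam_JMeq | apply tapp_JMeq | apply tletmap_JMeq
        | apply tlet_JMeq ];
  auto using map_ity_term_model, ity_term_model, ity_var_JMeq.
Qed.

Lemma teq_ity_tm {G A} (t u : tm G A) : teq (ity_tm t) (ity_tm u) -> teq t u.
Proof.
  assert (transport : forall G' A' (x y : tm G' A'), teq x y ->
    G' = G -> A' = A -> JMeq x t -> JMeq y u -> teq t u).
  { intros G' A' x y Hxy -> -> Hxt Hyu. apply JMeq_eq in Hxt, Hyu. subst. auto. }
  intro H. eapply transport; eauto using map_ity_term_model, ity_term_model, ity_tm_JMeq.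
Qed.

Lemma completeness {G A} (t u : tm G A) :
  (forall (M : SJModel) (b : Ob M), interp M b t = interp M b u) -> teq t u.
Proof.
  intro H. specialize (H term_model Base). rewrite !interp_term_model in H.
  apply cls_inj, (teq_sub _ _) with (s := scons (ctx_tuple G) nosub) in H.
  rewrite !sub_sub in H.
  apply teq_ity_tm.
  rewrite <- (sub_ids (ity_tm t)), <- (sub_ids (ity_tm u)).
  transitivity (sub (ity_tm t) (fun C v => sub (ctx_proj G C v) (scons (ctx_tuple G) nosub))).
  { symmetry. apply teq_sub_cong, ctx_proj_tuple. }
  rewrite H. apply teq_sub_cong, ctx_proj_tuple.
Qed.

Theorem proposition3p3 (G : ctx) (A : ty) (t u : tm G A) :
  teq t u <-> (forall (M : SJModel) (b : Ob M), interp M b t = interp M b u).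
Proof.
  split.
  - intros H M b. exact (soundness M b t u H).
  - apply completeness.
Qed.
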